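(* Let $\mathbb S$ be the free semigroup action on the compact metric space $X$ generated by continuous maps $g_1,\dots,g_p$ with $p\ge2$. Then every point of $\Sigma_p^+\times X$ is an entropy point of $\mathcal F_G$, i.e. $E_p(\Sigma_p^+\times X,\mathcal F_G)=\Sigma_p^+\times X$.
   Context: $\Sigma_p^+=\{1,\dots,p\}^{\mathbb N}$ with metric $D(\omega,\omega')=p^{-\min\{n:\omega_n\ne\omega'_n\}}$ and shift $\sigma$; $\mathcal F_G(\omega,x)=(\sigma\omega,g_{\omega_1}(x))$ on $\Sigma_p^+\times X$ with metric $\max(D,d)$. For $Z\subset\Sigma_p^+\times X$, $h_{top}(Z,\mathcal F_G)=\lim_{\varepsilon\to0}\limsup_n\frac1n\log s_n(Z,\varepsilon)$, with $s_n(Z,\varepsilon)$ the maximal cardinality of an $(n,\varepsilon)$-separated subset of $Z$ for $\mathcal F_G$. A point $z$ is an entropy point of $\mathcal F_G$ if $h_{top}(F,\mathcal F_G)>0$ for every closed neighbourhood $F$ of $z$; $E_p(\Sigma_p^+\times X,\mathcal F_G)$ is the set of such points. *)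

From HB Require Import structures.
From mathcomp Require Import all_boot all_order all_algebra.
From mathcomp Require Import all_classical all_reals all_analysis.
Set Implicit Arguments. Unset Strict Implicit. Unset Printing Implicit Defensive.
Import Order.TTheory GRing.Theory Num.Theory.
Import numFieldNormedType.Exports.
Local Open Scope classical_set_scope.
Local Open Scope ring_scope.

Section SkewProduct.
Variables (R : realType) (X : metricType R) (p : nat) (g : 'I_p -> X -> X).

(* Sigma_p^+ : one-sided sequences; symbols {1..p} are encoded as 'I_p = {0..p-1},
   and coordinates omega_1, omega_2, ... are encoded as w 0, w 1, ... *)
Definition seqSpace := nat -> 'I_p.

(* D(w,w') = p^{-min{n : w_n <> w'_n}} with 1-based n, i.e. p^{-(k+1)} where k
   is the first 0-based index of disagreement; D(w,w) = 0. *)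
Definition Dseq (w w' : seqSpace) : R :=
  match pselect (exists n, w n != w' n) with
  | left e => (p%:R) ^- (ex_minn e).+1
  | right _ => 0
  end.

Definition pt := (seqSpace * X)%type.

Definition pdist (z z' : pt) : R := Num.max (Dseq z.1 z'.1) (mdist z.2 z'.2).

Definition FG (z : pt) : pt := (fun n => z.1 n.+1, g (z.1 0%N) z.2).

Definition pclosed (F : set pt) : Prop :=
  forall z, (forall r : R, 0 < r -> exists y, F y /\ pdist z y < r) -> F z.
Definition pnbhs (z : pt) (F : set pt) : Prop :=
  exists2 r : R, 0 < r & forall y, pdist z y < r -> F y.

Definition separated (n : nat) (eps : R) (Z : set pt) (m : nat) (f : 'I_m -> pt) :=
  (forall i, Z (f i)) /\
  (forall i j, i != j ->
     exists2 k, (k < n)%N & eps < pdist (iter k FG (f i)) (iter k FG (f j))).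

Definition sn (Z : set pt) (eps : R) (n : nat) : \bar R :=
  ereal_sup [set (m%:R)%:E | m in [set m | exists f : 'I_m -> pt, separated n eps Z f]].

Definition elog (x : \bar R) : \bar R :=
  match x with
  | EFin r => (ln r)%:E
  | +oo%E => +oo%E
  | -oo%E => -oo%E
  end.

Definition htop (Z : set pt) : \bar R :=
  lim ((fun eps : R => limn_esup (fun n : nat => ((n%:R)^-1)%:E * elog (sn Z eps n))%E)
        @ 0^'+).

Definition entropy_point (z : pt) : Prop :=
  forall F : set pt, pclosed F -> pnbhs z F -> (0 < htop F)%E.

Definition Ep : set pt := [set z | entropy_point z].

End SkewProduct.

From Pilot Require Import Defs.
From HB Require Import structures.
From mathcomp Require Import all_boot all_order all_algebra.
From mathcomp Require Import all_classical all_reals all_analysis.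
From mathcomp Require Import ring.
Set Implicit Arguments. Unset Strict Implicit. Unset Printing Implicit Defensive.
Import Order.TTheory GRing.Theory Num.Theory.
Import numFieldNormedType.Exports.
Local Open Scope classical_set_scope.
Local Open Scope ring_scope.

(* Every point z = (w, x) of the skew product is an entropy point, whatever the
   maps g_i are.
   A neighbourhood F of z contains a ball of radius r, hence every point
   (w', x) whose sequence w' agrees with w on the first K symbols, where
   p^-(K+1) < r.  Filling the next M symbols freely with a word t in {1..p}^M
   gives p^M points of F; two different words differ at some position K + d,
   and after K + d < 2M shifts the two orbits differ in their first symbol,
   i.e. are at distance 1/p > 1/(2p).  Hence s_{2M}(F, 1/(2p)) >= p^M and the
   growth rate limsup_n (1/n) log s_n(F, 1/(2p)) is at least (log p)/2.  As
   s_n(F, eps) is nonincreasing in eps, so is the growth rate, and the limit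
   h_top(F) as eps -> 0+ is at least its value at 1/(2p), which is positive. *)

Lemma small_cylinder (R : realType) (p : nat) (r : R) : (1 < p)%N -> 0 < r ->
  exists K, (p%:R ^+ K.+1)^-1 < r.
Proof.
move=> p_gt1 r_gt0; exists (Num.bound r^-1).
have bound_ok : (r^-1 < (Num.bound r^-1)%:R)%R.
  by apply: archi_boundP; rewrite invr_ge0 ltW.
rewrite -[X in _ < X](invrK r) ltf_pV2 ?posrE ?invr_gt0 ?exprn_gt0 ?ltr0n //;
  last exact: ltn_trans p_gt1.
apply: (lt_trans bound_ok); rewrite -natrX ltr_nat.
exact: leq_ltn_trans (ltn_expl _ p_gt1).
Qed.

Section SkewProductEntropy.
Variables (R : realType) (X : metricType R) (p : nat) (g : 'I_p -> X -> X).
Hypothesis p_gt1 : (1 < p)%N.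

Let p_gt0 : (0 < p)%N. Proof. exact: ltn_trans p_gt1. Qed.

Lemma iter_FG_shift k (z : pt X p) n : (iter k (FG g) z).1 n = z.1 (n + k)%N.
Proof.
elim: k z n => [|k IH] z n /=; first by rewrite addn0.
by rewrite IH addSnnS.
Qed.

Lemma Dseq_first_diff (w w' : seqSpace p) : w 0%N != w' 0%N ->
  Dseq R w w' = (p%:R)^-1.
Proof.
move=> w0; rewrite /Dseq; case: pselect => [e|]; last by move=> /(_ (ex_intro _ 0%N w0)).
case: ex_minnP => m _ /(_ 0%N w0); rewrite leqn0 => /eqP ->.
by rewrite expr1.
Qed.

Lemma Dseq_agree (w w' : seqSpace p) K :
  (forall n, (n < K)%N -> w n = w' n) -> Dseq R w w' <= (p%:R ^+ K.+1)^-1.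
Proof.
move=> agree; rewrite /Dseq; case: pselect => [e|_]; last by rewrite invr_ge0 exprn_ge0.
case: ex_minnP => m /eqP wm _.
have Km : (K <= m)%N by rewrite leqNgt; apply/negP => /agree.
have p_ge1 : 1 <= p%:R :> R by rewrite ler1n.
rewrite lef_pV2 ?posrE ?exprn_gt0 ?(lt_le_trans ltr01) //.
exact: ler_weXn2l.
Qed.

Lemma pdistxx (z : pt X p) : pdist z z = 0.
Proof.
rewrite /pdist /Dseq mdistxx; case: pselect => [[n /negP[]]|_] //.
by rewrite maxxx.
Qed.

Lemma pnbhs_mem (z : pt X p) (F : set (pt X p)) : pnbhs z F -> F z.
Proof. by case=> r r_gt0; apply; rewrite pdistxx. Qed.

Definition splice (w : seqSpace p) (K M : nat) (t : {ffun 'I_M -> 'I_p}) :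
    seqSpace p :=
  fun n => if (n < K)%N then w n else odflt (w n) (omap t (insub (n - K)%N)).

Lemma splice_prefix w K M (t : {ffun 'I_M -> 'I_p}) n :
  (n < K)%N -> splice w K t n = w n.
Proof. by rewrite /splice => ->. Qed.

Lemma splice_word w K M (t : {ffun 'I_M -> 'I_p}) (d : 'I_M) :
  splice w K t (d + K)%N = t d.
Proof. by rewrite /splice ltnNge leq_addl /= addnK valK. Qed.

(* The separation scale 1/(2p), below the distance 1/p of distinct first symbols. *)
Definition sep_scale : R := (p%:R)^-1 / 2.

Lemma spliced_separated (z : pt X p) (F : set (pt X p)) (r : R) K M :
  (forall y, pdist z y < r -> F y) -> (p%:R ^+ K.+1)^-1 < r -> (K <= M)%N ->
  Defs.separated g (M + M) sep_scale F
    (fun i : 'I_#|{ffun 'I_M -> 'I_p}| => (splice z.1 K (enum_val i), z.2)).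
Proof.
move=> ball_F cyl_r KM; split=> [i|i j ij].
  apply: ball_F; rewrite /pdist /= mdistxx; apply: le_lt_trans cyl_r.
  rewrite ge_max invr_ge0 exprn_ge0 ?ler0n // andbT.
  by apply: Dseq_agree => n nK; rewrite splice_prefix.
have [d word_d] : exists d, enum_val i d != enum_val j d.
  apply/existsP; apply: contraR ij => /existsPn same.
  by apply/eqP/enum_val_inj/ffunP => d; apply/eqP/negPn/same.
exists (d + K)%N; first by rewrite (@leq_trans (M + K)) ?ltn_add2r ?leq_add2l.
rewrite /pdist Dseq_first_diff; last by rewrite !iter_FG_shift /= !splice_word.
rewrite lt_max gtr_pMr ?invr_gt0 ?ltr0n // invf_lt1 ?ltr1n //.
Qed.

Lemma sn_spliced_lower (z : pt X p) (F : set (pt X p)) : pnbhs z F ->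
  exists K, forall M, (K <= M)%N ->
    (((p ^ M)%N%:R)%:E <= sn g F sep_scale (M + M))%E.
Proof.
move=> [r r_gt0 ball_F]; have [K cyl_r] := small_cylinder p_gt1 r_gt0.
exists K => M KM; apply: ereal_sup_ubound.
exists #|{ffun 'I_M -> 'I_p}|; last by rewrite card_ffun !card_ord.
by eexists; exact: spliced_separated ball_F cyl_r KM.
Qed.

Local Open Scope ereal_scope.

Definition sep_growth (F : set (pt X p)) (eps : R) : \bar R :=
  limn_esup (fun n : nat => ((n%:R)^-1)%:E * elog (sn g F eps n)).

Lemma log_rate_lower (s : \bar R) M : (0 < M)%N ->
  ((p ^ M)%N%:R)%:E <= s -> (ln p%:R / 2)%:E <= ((M + M)%N%:R^-1)%:E * elog s.
Proof.
move=> M_gt0; case: s => [s| |] //=; last first.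
  by move=> _; rewrite gt0_muley ?leey // lte_fin invr_gt0 ltr0n addn_gt0 M_gt0.
rewrite lee_fin => pM_le_s.
have pM_gt0 : (0 < (p ^ M)%N%:R :> R)%R by rewrite ltr0n expn_gt0 p_gt0.
have log_le : (ln ((p ^ M)%N%:R) <= ln s)%R.
  by rewrite ler_ln // posrE // (lt_le_trans pM_gt0).
rewrite natrX lnXn ?ltr0n // in log_le.
rewrite -EFinM lee_fin; apply: le_trans (ler_wpM2l _ log_le); last first.
  by rewrite invr_ge0 ler0n.
rewrite -mulr_natr natrD le_eqVlt; apply/orP; left; apply/eqP; field.
by rewrite -natrD lt0r_neq0 // ltr0n addn_gt0 M_gt0.
Qed.

Lemma sep_growth_lower (z : pt X p) (F : set (pt X p)) : pnbhs z F ->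
  (ln p%:R / 2)%:E <= sep_growth F sep_scale.
Proof.
move=> nbhs_F; have [K spliced] := sn_spliced_lower nbhs_F.
rewrite /sep_growth limn_esup_lim; apply: lime_ge; first exact: is_cvg_esups.
apply: nearW => n; set N := (n + K).+1.
apply: le_ereal_sup_tmp; exists (((N + N)%N%:R^-1)%:E * elog (sn g F sep_scale (N + N))).
  by exists (N + N)%N => //=; rewrite (leq_trans _ (leq_addl _ _)) // ltnW // ltnS leq_addr.
by apply: log_rate_lower => //; apply: spliced; rewrite ltnW // ltnS leq_addl.
Qed.

Lemma sn_anti (F : set (pt X p)) (e1 e2 : R) n : (e1 <= e2)%R ->
  sn g F e2 n <= sn g F e1 n.
Proof.
move=> e12; apply: ereal_sup_le => _ [m [f [in_F sep]] <-].
exists m => //; exists f; split => // i j ij.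
by have [k kn far] := sep i j ij; exists k => //; exact: le_lt_trans far.
Qed.

Lemma sn_ge1 (F : set (pt X p)) (z : pt X p) eps n : F z -> 1 <= sn g F eps n.
Proof.
move=> Fz; apply: ereal_sup_ubound; exists 1%N => //.
by exists (fun _ => z); split => // i j; rewrite !ord1 eqxx.
Qed.

Lemma elog_le (a b : \bar R) : 1 <= a -> a <= b -> elog a <= elog b.
Proof.
case: a b => [a| |] // [b| |] //= a_ge1 ab; rewrite ?leey //.
rewrite !lee_fin in a_ge1 ab.
by rewrite lee_fin ler_ln // posrE (lt_le_trans ltr01) // (le_trans a_ge1).
Qed.

Lemma sep_growth_anti (F : set (pt X p)) (z : pt X p) (e1 e2 : R) :
  F z -> (e1 <= e2)%R -> sep_growth F e2 <= sep_growth F e1.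
Proof.
move=> Fz e12; rewrite /sep_growth !limn_esup_lim.
apply: lee_lim; try exact: is_cvg_esups.
near=> n; apply: ge_ereal_sup => _ [k nk <-].
apply: le_trans (_ : _ <= ((k%:R)^-1)%:E * elog (sn g F e1 k)) _.
  apply: lee_wpmul2l; first by rewrite lee_fin invr_ge0 ler0n.
  by apply: elog_le; [exact: sn_ge1 Fz | exact: sn_anti].
by apply: ereal_sup_ubound; exists k.
Unshelve. all: by end_near. Qed.

Lemma htop_ge_sep_growth (F : set (pt X p)) (z : pt X p) (eps : R) :
  F z -> (0 < eps)%R -> sep_growth F eps <= htop g F.
Proof.
move=> Fz eps_gt0; rewrite /htop -/(sep_growth F).
have mono : {in `]0%R, +oo[ &, {homo sep_growth F : x y / (x <= y)%R >-> y <= x}}.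
  by move=> x y _ _; exact: sep_growth_anti Fz.
have /cvg_lim -> := @nonincreasing_at_right_cvge _ (sep_growth F) 0%R +oo%O isT mono.
  by apply: ereal_sup_ubound; exists eps => //=; rewrite in_itv /= eps_gt0.
exact: ereal_hausdorff.
Qed.

End SkewProductEntropy.

Theorem mainTheorem6 (R : realType) (X : metricType R) (p : nat)
  (g : 'I_p -> X -> X) :
  (2 <= p)%N -> compact [set: X] -> (forall i, continuous (g i)) ->
  Ep g = [set: pt X p].
Proof.
move=> p_gt1 _ _; apply/seteqP; split => // z _ F _ nbhs_F.
have scale_gt0 : (0 < sep_scale R p)%R.
  by rewrite divr_gt0 // invr_gt0 ltr0n (ltn_trans _ p_gt1).
have rate_gt0 : (0 < (ln p%:R / 2 : R)%:E)%E by rewrite lte_fin divr_gt0 // ln_gt0 // ltr1n.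
apply: (lt_le_trans rate_gt0); apply: le_trans (sep_growth_lower g p_gt1 nbhs_F) _.
exact: htop_ge_sep_growth (pnbhs_mem nbhs_F) scale_gt0.
Qed.
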